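(* Let $\langle \mathscr{A} \mid \mathscr{R} \rangle$ be a monoid presentation satisfying $C(2)$, and let $a \in \mathscr{A}$. Then $a$ is either indecomposable or redundant.
   Context: A monoid presentation $\langle \mathscr{A} \mid \mathscr{R} \rangle$ consists of an alphabet $\mathscr{A}$ and a set $\mathscr{R} \subseteq \mathscr{A}^* \times \mathscr{A}^*$ of relations; $\equiv_\mathscr{R}$ is the smallest congruence on $\mathscr{A}^*$ containing $\mathscr{R}$, $[u]$ denotes the class of $u$, and the monoid presented is $\mathscr{A}^*/\equiv_\mathscr{R}$. A relation word is a word occurring as one side of a relation in $\mathscr{R}$. A piece is a word which occurs as a factor of two distinct relation words, or in two different (possibly overlapping) positions within one relation word; the empty word is always a piece. The presentation is $C(n)$ ($n$ a positive integer) if no relation word can be written as a product of strictly fewer than $n$ pieces. A generator $a \in \mathscr{A}$ is redundant if $a$ is $\equiv_\mathscr{R}$-equivalent to a product of zero or more generators other than $a$ (equivalently, the monoid presented is generated by the classes of the letters in $\mathscr{A} \setminus \{a\}$). A non-identity element $s$ of a monoid is indecomposable if whenever $xy = s$ we have $x = 1$ or $y = 1$; a generator $a$ is indecomposable if $[a]$ is indecomposable. *)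

From Stdlib Require Import List.
Import ListNotations.
Set Implicit Arguments.

Section Presentation.
Variable A : Type.
Variable R : list A -> list A -> Prop.

Inductive congR : list A -> list A -> Prop :=
| congR_rel : forall u v, R u v -> congR u v
| congR_refl : forall u, congR u u
| congR_sym : forall u v, congR u v -> congR v u
| congR_trans : forall u v w, congR u v -> congR v w -> congR u w
| congR_ctx : forall x y u v, congR u v -> congR (x ++ u ++ y) (x ++ v ++ y).

Definition relation_word (r : list A) : Prop :=
  exists s, R r s \/ R s r.

Definition piece (p : list A) : Prop :=
  p = [] \/
  exists r1 r2 x1 y1 x2 y2,
    relation_word r1 /\ relation_word r2 /\
    r1 = x1 ++ p ++ y1 /\ r2 = x2 ++ p ++ y2 /\
    (r1 <> r2 \/ length x1 <> length x2).

Definition small_cancellation (n : nat) : Prop :=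
  forall r, relation_word r ->
  forall ps : list (list A), length ps < n ->
    (forall p, In p ps -> piece p) -> r <> concat ps.

Definition redundant (a : A) : Prop :=
  exists w : list A, ~ In a w /\ congR [a] w.

(* a is indecomposable: [a] is not the identity, and whenever [x][y] = [a]
   then [x] = 1 or [y] = 1 (every monoid element is a class [x]). *)
Definition indecomposable (a : A) : Prop :=
  ~ congR [a] [] /\
  forall x y : list A, congR (x ++ y) [a] -> congR x [] \/ congR y [].
End Presentation.

(* Under C(2) no relation word is empty, and a relation word containing the
   letter a cannot coexist with the relation word [a] unless it is [a] itself
   (otherwise [a] would be a piece, and [a] a product of one piece).  So if a is
   not redundant, every relation either has both sides equal to [a] or neither.
   Then every elementary step of the congruence maps [] to [] and [a] to [a],
   so the classes of [] and [a] are singletons, which forces indecomposability. *)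
From Stdlib Require Import List Classical.
Import ListNotations.

Lemma app3_eq_nil {A : Type} {x u y : list A} (E : x ++ u ++ y = []) :
  x = [] /\ u = [] /\ y = [].
Proof.
  apply app_eq_nil in E as [-> E]. apply app_eq_nil in E as [-> ->]. auto.
Qed.

Lemma app3_eq_unit {A : Type} {x u y : list A} {b : A} (E : x ++ u ++ y = [b]) :
  u = [] \/ (x = [] /\ u = [b] /\ y = []).
Proof.
  apply app_eq_unit in E as [[-> E]|[_ E]].
  - apply app_eq_unit in E as [[-> _]|[-> ->]]; auto.
  - apply app_eq_nil in E as [-> _]. auto.
Qed.

Lemma app3_transfer {A : Type} (x y : list A) {u v : list A} {b : A}
    (Hnil : u = [] -> v = []) (Hb : u = [b] -> v = [b]) :
  (x ++ u ++ y = [] -> x ++ v ++ y = []) /\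
  (x ++ u ++ y = [b] -> x ++ v ++ y = [b]).
Proof.
  split.
  - intros E. destruct (app3_eq_nil E) as (-> & -> & ->).
    now rewrite Hnil.
  - intros E. destruct (app3_eq_unit E) as [Eu|(-> & -> & ->)].
    + rewrite Hnil by exact Eu. subst u. exact E.
    + now rewrite Hb.
Qed.

Section SingletonClasses.
Context {A : Type} {R : list A -> list A -> Prop}.

Lemma congR_preserves_nil_and_letter (b : A) :
  (forall u v, R u v -> u <> [] /\ v <> []) ->
  (forall u v, R u v -> u = [b] <-> v = [b]) ->
  forall u v, congR R u v -> (u = [] <-> v = []) /\ (u = [b] <-> v = [b]).
Proof.
  intros Hnil Hb.
  induction 1 as [u v H| |u v _ IH|u v w _ IH1 _ IH2|x y u v _ IH].
  - destruct (Hnil u v H). split; [split; intros; contradiction|auto].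
  - tauto.
  - tauto.
  - tauto.
  - destruct IH as [[nil_uv nil_vu] [b_uv b_vu]].
    destruct (app3_transfer x y nil_uv b_uv).
    destruct (app3_transfer x y nil_vu b_vu).
    tauto.
Qed.

End SingletonClasses.

Section SmallCancellation.
Context {A : Type} {R : list A -> list A -> Prop}.
Hypothesis C2 : small_cancellation R 2.

Lemma relation_word_neq_nil r : relation_word R r -> r <> [].
Proof.
  intros Hr Er. apply (C2 r Hr []); simpl; auto. contradiction.
Qed.

Lemma relation_word_letter (a : A) r :
  relation_word R [a] -> relation_word R r -> In a r -> r = [a].
Proof.
  intros Ha Hr Hin. apply NNPP. intros Hneq.
  apply (C2 [a] Ha [[a]]); simpl; auto.
  intros p [<-|[]]. right.
  destruct (in_split _ _ Hin) as (l1 & l2 & ->).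
  exists [a], (l1 ++ a :: l2), [], [], l1, l2. repeat split; auto.
Qed.

Lemma relation_letter_iff (a : A) u v :
  ~ redundant R a -> R u v -> u = [a] <-> v = [a].
Proof.
  intros Hirred H.
  assert (Hu : relation_word R u) by (exists v; auto).
  assert (Hv : relation_word R v) by (exists u; auto).
  assert (Hin : forall w, congR R [a] w -> In a w).
  { intros w Hw. apply NNPP. intros Hout. apply Hirred. now exists w. }
  split; intros ->; apply relation_word_letter; auto.
  - apply Hin. now apply congR_rel.
  - apply Hin. apply congR_sym. now apply congR_rel.
Qed.

End SmallCancellation.

Theorem proposition5 (A : Type) (R : list A -> list A -> Prop) (a : A) :
  small_cancellation R 2 -> indecomposable R a \/ redundant R a.
Proof.
  intros C2. destruct (classic (redundant R a)) as [Hred|Hirred]; [now right|left].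
  assert (Hclass : forall u v, congR R u v ->
            (u = [] <-> v = []) /\ (u = [a] <-> v = [a])).
  { apply congR_preserves_nil_and_letter.
    - intros u v H. split; apply (relation_word_neq_nil C2); eexists; eauto.
    - intros u v. now apply (relation_letter_iff C2). }
  split.
  - intros E. destruct (Hclass _ _ E) as [_ [Ha _]]. discriminate (Ha eq_refl).
  - intros x y E. destruct (Hclass _ _ E) as [_ [_ Hxy]].
    destruct (app_eq_unit x y (Hxy eq_refl)) as [[-> _]|[_ ->]];
      [left|right]; apply congR_refl.
Qed.
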